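(* Let $n\ge3$ be odd, $d,R\in\mathbb{Q}$, $d\ne0$, $R$ not a square, $D=d^2-R$, $K_0=\mathbb{Q}(\sqrt R)$, and $P=Z^n-D^{(n-1)/2}(d+\sqrt R)\in K_0[Z]$. Then $f_n=f_n(Z,d,R)$ is irreducible in $\mathbb{Q}[Z]$ if and only if $P$ is irreducible in $K_0[Z]$.
   Context: $f_n(Z,d,R)=\sum_{j=0}^{(n-1)/2}(-1)^j\frac{n}{n-j}\binom{n-j}{j}D^jZ^{n-2j}-2dD^{(n-1)/2}$, which equals $\sqrt D^{\,n}F_n(Z/\sqrt D)-2dD^{(n-1)/2}$ where $F_n(Z)=2T_n(Z/2)$ and $T_n$ is the Chebyshev polynomial of the first kind. (If $x$ is a zero of $P$, then $x+D/x$ is a zero of $f_n$.) *)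

From HB Require Import structures.
From mathcomp Require Import all_boot all_order all_algebra all_field.
Set Implicit Arguments. Unset Strict Implicit. Unset Printing Implicit Defensive.
Import Order.TTheory GRing.Theory Num.Theory.
Local Open Scope ring_scope.

Definition Dval (d R : rat) : rat := d ^+ 2 - R.

Definition fpoly (n : nat) (d R : rat) : {poly rat} :=
  \sum_(j < (n.-1)./2.+1)
     ((-1) ^+ j * (n%:R / (n - j)%:R) * ('C(n - j, j))%:R * Dval d R ^+ j)%:P
       * 'X ^+ (n - 2 * j)
  - (2 * d * Dval d R ^+ (n.-1)./2)%:P.

(* P = Z^n - D^((n-1)/2) (d + sqrt R) in K0[Z], where s plays sqrt R in L *)
Definition Ppoly (L : fieldExtType rat) (n : nat) (d R : rat) (s : L) : {poly L} :=
  'X ^+ n - ((Dval d R ^+ (n.-1)./2)%:A * (d%:A + s))%:P.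

From HB Require Import structures.
From mathcomp Require Import all_boot all_order all_algebra all_field.
From mathcomp Require Import ring zify.
From Stdlib Require Import Classical.
Import Order.TTheory GRing.Theory Num.Theory.
Set Implicit Arguments. Unset Strict Implicit. Unset Printing Implicit Defensive.
Local Open Scope ring_scope.

(* Write c' = D^m (d - sqrt R) for the conjugate of c: c + c' = 2dD^m and
   c c' = D^n.  The coefficients of f_n are the Lucas coefficients, so by
   Dickson's identity f_n(y + D/y) = y^n + (D/y)^n - 2dD^m; hence for every
   root x of P, theta = x + D/x is a root of f_n, since (D/x)^n = D^n/c = c'.

   - If P is irreducible, adjoin a root x: [L(x) : L] = n.  If x were not in
     L(theta), then x and D/x would be conjugate over L(theta), forcing
     c = c'; so L(theta) = L(x) and theta has degree n over L, hence f_n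
     (of degree n) is irreducible over Q.
   - If f_n is irreducible, a root x of an irreducible factor of P of
     degree k gives [L(x) : Q] = k [L : Q], divisible by the degree n of
     theta; as [L : Q] <= 2 is prime to the odd n, k = n. *)

(* The Lucas coefficients lucas N j = N/(N-j) * C(N-j, j) (for 2j <= N),
   written without division as C(N-j, j) + C(N-j-1, j-1). *)
Definition lucas (N j : nat) : nat :=
  if (2 * j <= N)%N then
    ('C(N - j, j) + if j is i.+1 then 'C(N - i.+2, i) else 0)%N
  else 0%N.

Lemma lucas0 N : lucas N 0 = 1%N.
Proof. by rewrite /lucas /= bin0 addn0. Qed.

Lemma lucas_eq0 N j : (N < 2 * j)%N -> lucas N j = 0%N.
Proof. by rewrite /lucas ltnNge => /negbTE ->. Qed.

(* Pascal-type recurrence, mirroring D_{N+2} = t D_{N+1} - e D_N. *)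
Lemma lucasS N i : (1 <= N)%N -> lucas N.+2 i.+1 = (lucas N.+1 i.+1 + lucas N i)%N.
Proof.
move=> N_gt0; rewrite /lucas.
have [iN|Ni] := ltnP N (2 * i).
  by rewrite !ifF //; apply/negbTE; rewrite -ltnNge; lia.
rewrite ifT; last by lia.
have [i_small|i_half] := leqP (2 * i.+1) N.+1.
  have -> : (N.+2 - i.+1 = (N - i).+1)%N by lia.
  have -> : (N.+2 - i.+2 = N - i)%N by lia.
  have -> : (N.+1 - i.+1 = N - i)%N by lia.
  have -> : (N.+1 - i.+2 = (N - i).-1)%N by lia.
  rewrite binS; case: i Ni i_small => [|i] Ni i_small.
    by rewrite !bin0 addn0 subn0.
  have -> : (N - i.+1 = (N - i.+2).+1)%N by lia.
  rewrite binS /= (binS (N - i.+2) i); lia.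
have {Ni i_half} N_eq : N = (2 * i)%N by lia.
subst N; case: i N_gt0 => [|i] // _.
have -> : ((2 * i.+1).+2 - i.+2 = i.+2)%N by lia.
have -> : ((2 * i.+1).+2 - i.+3 = i.+1)%N by lia.
have -> : (2 * i.+1 - i.+1 = i.+1)%N by lia.
have -> : (2 * i.+1 - i.+2 = i)%N by lia.
by rewrite !binn.
Qed.

Lemma lucas_ratio N j : (2 * j < N)%N -> (N * 'C(N - j, j) = (N - j) * lucas N j)%N.
Proof.
move=> jN; rewrite /lucas ifT; last by lia.
case: j jN => [|i] jN; first by rewrite bin0 subn0 addn0.
have := mul_bin_diag (N - i.+1) i.
have -> : ((N - i.+1).-1 = N - i.+2)%N by lia.
move: ('C(_, _)) => c E; rewrite mulnDr E; lia.
Qed.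

(* Dickson's identity: with t = y + e/y,
   sum_j (-1)^j lucas N j e^j t^(N-2j) = y^N + (e/y)^N.  The sum is taken over
   a fixed range j < B that is long enough for all the N considered. *)
Section Dickson.
Variables (K : fieldType) (e y : K).
Hypothesis y_neq0 : y != 0.
Let t := y + e / y.

Definition dickson_term N j : K :=
  (-1) ^+ j * (lucas N j)%:R * e ^+ j * t ^+ (N - 2 * j).
Definition dickson_sum B N : K := \sum_(0 <= j < B) dickson_term N j.

Lemma dickson_term_eq0 N j : (N < 2 * j)%N -> dickson_term N j = 0.
Proof. by move=> jN; rewrite /dickson_term lucas_eq0 // mulr0 !mul0r. Qed.

Lemma dickson_termS N i : (1 <= N)%N ->
  dickson_term N.+2 i.+1 = t * dickson_term N.+1 i.+1 - e * dickson_term N i.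
Proof.
move=> N_gt0; rewrite /dickson_term lucasS // natrD.
have -> : (N.+2 - 2 * i.+1 = N - 2 * i)%N by lia.
have [i_small|i_big] := leqP (2 * i.+1) N.+1.
  have -> : (N - 2 * i = (N.+1 - 2 * i.+1).+1)%N by lia.
  rewrite !exprS; ring.
rewrite lucas_eq0 // !exprS; ring.
Qed.

Lemma dickson_sumS B N : (1 <= N)%N -> (N.+2 < B)%N ->
  dickson_sum B N.+2 = t * dickson_sum B N.+1 - e * dickson_sum B N.
Proof.
move=> N_gt0; case: B => [//|B] NB.
have -> : dickson_sum B.+1 N = \sum_(0 <= i < B) dickson_term N i.
  by rewrite /dickson_sum big_nat_recr //= dickson_term_eq0 ?addr0 //; lia.
rewrite /dickson_sum !big_nat_recl // mulrDr !mulr_sumr.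
under eq_bigr do rewrite dickson_termS //.
rewrite big_split /= sumrN /dickson_term lucas0 !subn0 !expr0 !mul1r exprS.
ring.
Qed.

(* Both sides satisfy the same recurrence and agree for N = 1, 2. *)
Lemma dickson_identity B N : (1 <= N)%N -> (N < B)%N ->
  dickson_sum B N = y ^+ N + (e / y) ^+ N.
Proof.
elim/ltn_ind: N => -[|[|[|N]]] IH // _ NB.
- rewrite /dickson_sum (big_ltn (ltnW NB)) big1_seq ?addr0.
    by rewrite /dickson_term lucas0 expr0 !mul1r.
  move=> j; rewrite mem_index_iota => /andP[_ /andP[j_gt0 _]].
  by rewrite dickson_term_eq0 //; lia.
- rewrite /dickson_sum (big_ltn (ltnW (ltnW NB))) (big_ltn (ltnW NB)).
  rewrite big1_seq ?addr0.
    rewrite /dickson_term lucas0 (_ : lucas 2 1 = 2%N) // muln0 subn0 muln1 subnn.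
    by rewrite /t; field.
  move=> j; rewrite mem_index_iota => /andP[_ /andP[j_gt1 _]].
  by rewrite dickson_term_eq0 //; lia.
rewrite dickson_sumS // ?IH //; try lia.
by rewrite /t !exprS; field.
Qed.
End Dickson.

Lemma odd_halfE n : odd n -> n = (2 * (n.-1)./2).+1.
Proof.
move=> n_odd; have := odd_halfK n_odd; rewrite -mul2n.
have := odd_double_half n; rewrite n_odd -mul2n; lia.
Qed.

Lemma fpolyE n d R : odd n ->
  fpoly n d R = \sum_(0 <= j < n.+1)
     ((-1) ^+ j * (lucas n j)%:R * Dval d R ^+ j)%:P * 'X ^+ (n - 2 * j)
  - (2 * d * Dval d R ^+ (n.-1)./2)%:P.
Proof.
move=> n_odd; rewrite /fpoly; congr (_ - _).
have n_eq := odd_halfE n_odd; set m := (n.-1)./2 in n_eq *.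
rewrite (@big_cat_nat _ _ _ m.+1 0 n.+1) //=; last by lia.
rewrite [X in _ + X]big1_seq ?addr0; last first.
  move=> j; rewrite mem_index_iota => /andP[_ /andP[mj _]].
  by rewrite lucas_eq0 ?mulr0 ?mul0r ?polyC0 ?mul0r //; lia.
rewrite big_mkord; apply: eq_bigr => j _.
have j_lt : (2 * j < n)%N by have := ltn_ord j; lia.
have nj_neq0 : ((n - j)%:R : rat) != 0 by rewrite pnatr_eq0; lia.
congr ((_ * _)%:P * _); rewrite -mulrA mulrAC -natrM lucas_ratio //.
by rewrite natrM mulrAC divff // mul1r.
Qed.

Lemma horner_fpoly (K : fieldType) (phi : {rmorphism rat -> K}) n d R y :
  odd n -> y != 0 ->
  (map_poly phi (fpoly n d R)).[y + phi (Dval d R) / y] =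
  y ^+ n + (phi (Dval d R) / y) ^+ n - phi (2 * d * Dval d R ^+ (n.-1)./2).
Proof.
move=> n_odd y_neq0; rewrite fpolyE // rmorphB /= map_polyC hornerD hornerN hornerC.
congr (_ - _); rewrite -(dickson_identity _ y_neq0 (B := n.+1)) //; last first.
  by have := odd_halfE n_odd; lia.
rewrite rmorph_sum horner_sum /dickson_sum; apply: eq_bigr => j _.
rewrite rmorphM /= map_polyC map_polyXn hornerCM hornerXn /dickson_term.
congr (_ * _).
change (phi ((-1) ^+ j * (lucas n j)%:R * Dval d R ^+ j) =
  (-1) ^+ j * (lucas n j)%:R * phi (Dval d R) ^+ j).
by rewrite !rmorphM !rmorphXn rmorphN1 rmorph_nat.
Qed.

Lemma size_fpoly n d R : odd n -> size (fpoly n d R) = n.+1.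
Proof.
move=> n_odd; have n_eq := odd_halfE n_odd.
rewrite fpolyE // big_ltn // lucas0 !mulr1 subn0 polyC1 mul1r -addrA.
rewrite size_polyDl ?size_polyXn // ltnS.
apply: leq_trans (size_polyD _ _) _; rewrite geq_max size_polyN size_polyC.
rewrite (leq_trans (leq_b1 _)) ?andbT; last by lia.
apply: leq_trans (size_sum _ _ _) _; apply/bigmax_leqP_seq => j.
rewrite mem_index_iota => /andP[j_gt0 _] _.
apply: leq_trans (size_polyMleq _ _) _; rewrite size_polyXn size_polyC.
by case: (_ != 0) => /=; lia.
Qed.

(* If c != 0 is a root of Z^2 - 2dD^m Z + D^n (whose two roots are c and
   D^n/c, with sum 2dD^m), then every n-th root x of c yields the root
   x + D/x of f_n. *)
Lemma root_fpoly (K : fieldType) (phi : {rmorphism rat -> K}) n d R (c x : K) :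
  odd n -> c != 0 ->
  c ^+ 2 - phi (2 * d * Dval d R ^+ (n.-1)./2) * c + phi (Dval d R) ^+ n = 0 ->
  x ^+ n = c -> root (map_poly phi (fpoly n d R)) (x + phi (Dval d R) / x).
Proof.
move=> n_odd c_neq0 c_root xn_eq.
have x_neq0 : x != 0.
  have n_gt0 : (0 < n)%N by case: (n) n_odd.
  by apply: contraNneq c_neq0 => x0; rewrite -xn_eq x0 expr0n eqn0Ngt n_gt0.
rewrite /root horner_fpoly // exprMn exprVn xn_eq.
set D := phi (Dval d R); set k := phi _.
have : (c + D ^+ n / c - k) * c = 0 by rewrite -c_root; field.
by move/eqP; rewrite mulf_eq0 (negbTE c_neq0) orbF.
Qed.

Lemma irreducible_factor (F : fieldType) (p : {poly F}) :
  (1 < size p)%N -> exists2 q : {poly F}, irreducible_poly q & q %| p.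
Proof.
elim/ltn_ind: {p}(size p) {-2}p (erefl (size p)) => N IH p p_size p_gt1.
have [p_irr|p_red] := classic (irreducible_poly p); first by exists p.
have [q [q_size q_dvd q_neqp]] : exists q : {poly F},
    [/\ size q != 1%N, q %| p & ~~ (q %= p)].
  apply: NNPP => no_q; apply: p_red; split => // q q_size q_dvd.
  by apply: NNPP => q_neqp; apply: no_q; exists q; split => //; apply/negP.
have p_neq0 : p != 0 by rewrite -size_poly_gt0; lia.
have q_neq0 : q != 0 by apply: contraNneq p_neq0 => q0; rewrite -(dvd0p p) -q0.
have q_lt : (size q < size p)%N.
  rewrite ltn_neqAle dvdp_leq // andbT.
  by apply: contraNneq q_neqp => /eqP; rewrite dvdp_size_eqp.
have q_gt1 : (1 < size q)%N by rewrite ltn_neqAle eq_sym q_size size_poly_gt0.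
have [r r_irr r_dvd] := IH _ (leq_trans q_lt (eq_leq p_size)) q erefl q_gt1.
by exists r => //; apply: dvdp_trans q_dvd.
Qed.

Lemma kHom_exp (F : fieldType) (M : fieldExtType F) (K E : {subfield M})
    (f : 'End(M)) (u : M) (k : nat) :
  kHom K E f -> u \in E -> f (u ^+ k) = f u ^+ k.
Proof.
case/kHomP_tmp => f_id f_mul u_in; elim: k => [|k IHk].
  by rewrite !expr0 f_id ?mem1v.
by rewrite !exprS f_mul ?rpredX // IHk.
Qed.

(* If x is not
   in E, then x and a/x are the two roots of its quadratic minimal polynomial
   over E, so some E-homomorphism swaps them; it fixes every power x^n lying
   in E, whence x^n = (a/x)^n, i.e. (x^n)^2 = a^n. *)
Lemma mem_of_sum_inv (F : fieldType) (M : fieldExtType F) (E : {subfield M})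
    (x a : M) (n : nat) :
  x != 0 -> a \in E -> x + a / x \in E -> x ^+ n \in E ->
  (x ^+ n) ^+ 2 != a ^+ n -> x \in E.
Proof.
move=> x_neq0 a_in sum_in xn_in; apply: contraR => x_notin.
pose q := ('X - x%:P) * ('X - (a / x)%:P).
have qE : q = 'X^2 - (x + a / x)%:P * 'X + a%:P.
  have -> : a%:P = x%:P * (a / x)%:P by rewrite -polyCM mulrCA divff ?mulr1.
  by rewrite /q polyCD; ring.
have q_over : q \is a polyOver E.
  by rewrite qE rpredD ?rpredB ?rpredM ?rpredX ?polyOverX ?polyOverC.
have q_monic : q \is monic by rewrite monicMl ?monicXsubC.
have q_size : size q = 3%N.
  by rewrite size_monicM ?monicXsubC ?polyXsubC_eq0 ?size_XsubC.
have x_root : root q x by rewrite rootM root_XsubC eqxx.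
have minE : minPoly E x = q.
  have min_dvd := minPoly_dvdp q_over x_root.
  have := dvdp_leq (monic_neq0 q_monic) min_dvd.
  have := adjoin_deg_eq1 E x; rewrite (negbTE x_notin) size_minPoly q_size.
  rewrite /adjoin_degree => deg_neq1 deg_le.
  apply/eqP; rewrite -eqp_monic ?monic_minPoly // -dvdp_size_eqp //.
  by rewrite size_minPoly q_size /adjoin_degree; apply/eqP; lia.
have conj_root : root (map_poly \1%VF (minPoly E x)) (a / x).
  rewrite (kHom_poly_id (kHom1 E E) (minPolyOver E x)) minE.
  by rewrite rootM !root_XsubC eqxx orbT.
pose sigma := kHomExtend E \1%VF x (a / x).
have sigma_hom : kHom E <<E; x>>%AS sigma := kHomExtendP (subvv E) (kHom1 E E) conj_root.
have sigma_x : sigma x = a / x := kHomExtend_val (kHom1 E E) conj_root.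
have [sigma_id _] := kHomP_tmp sigma_hom.
have := kHom_exp n sigma_hom (memv_adjoin E x).
rewrite sigma_id // sigma_x exprMn exprVn => xn_eq.
by rewrite expr2 {1}xn_eq mulfVK ?expf_neq0.
Qed.

(* A polynomial p over F is irreducible as soon as, in an extension M of a
   field K receiving F, one of its roots has degree at least (size p).-1 over
   K: a factor of p vanishing at that root has full size, and then the
   cofactor is constant. *)
Lemma irreducible_of_root_degree (F K : fieldType) (M : fieldExtType K)
    (psi : {rmorphism F -> K}) (p : {poly F}) (z : M) :
  (1 < size p)%N -> root (map_poly (in_alg M \o psi) p) z ->
  ((size p).-1 <= adjoin_degree 1%AS z)%N -> irreducible_poly p.
Proof.
move=> p_gt1 z_root deg_ge; split => // q q_size q_dvd.
have p_neq0 : p != 0 by rewrite -size_poly_gt0; lia.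
have root_big r : r != 0 -> root (map_poly (in_alg M \o psi) r) z ->
    (size p <= size r)%N.
  move=> r_neq0 r_root.
  have r_over : map_poly (in_alg M \o psi) r \is a polyOver 1%AS.
    by apply/polyOver1P; exists (map_poly psi r); rewrite map_poly_comp.
  have /dvdp_leq := minPoly_dvdp r_over r_root.
  by rewrite size_minPoly size_map_poly map_poly_eq0 => /(_ r_neq0); lia.
have /dvdpP [r p_eq] := q_dvd.
have /andP[r_neq0 q_neq0] : (r != 0) && (q != 0).
  by rewrite -negb_or -mulf_eq0 -p_eq.
have p_size : size p = (size r + size q).-1 by rewrite p_eq size_mul.
rewrite p_eq rmorphM rootM in z_root; case/orP: z_root => [/(root_big _ r_neq0)|].
  by have := size_poly_gt0 q; rewrite q_neq0; lia.
move=> /(root_big _ q_neq0) q_big.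
by rewrite -dvdp_size_eqp // eqn_leq dvdp_leq.
Qed.

Lemma dvdn_dim_of_root (F : fieldType) (M : fieldExtType F) (p : {poly F}) (z : M) :
  irreducible_poly p -> root (map_poly (in_alg M) p) z ->
  ((size p).-1 %| \dim {:M})%N.
Proof.
move=> p_irr z_root.
have p_over : map_poly (in_alg M) p \is a polyOver 1%AS by apply/polyOver1P; exists p.
have /polyOver1P [mu mu_eq] := minPolyOver 1%AS z.
have mu_dvd : mu %| p by rewrite -(dvdp_map (in_alg M)) -mu_eq (minPoly_dvdp p_over).
have mu_size : size mu = (adjoin_degree 1 z).+1.
  by rewrite -size_minPoly mu_eq size_map_poly.
have /eqp_size p_size : mu %= p by apply: p_irr.2; rewrite ?mu_size.
have := field_dimS (subvf <<1%AS; z>>%AS); rewrite dim_Fadjoin dimv1 muln1.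
by rewrite -p_size mu_size.
Qed.

Lemma dim_sqrt_ext (F : fieldType) (L : fieldExtType F) (s : L) (a : F) :
  s ^+ 2 = a%:A -> <<1; s>>%VS = fullv -> (\dim {:L} <= 2)%N.
Proof.
move=> s_sq s_gen.
have q_over : 'X^2 - (a%:A)%:P \is a polyOver (1%AS : {subfield L}).
  by rewrite rpredB ?rpredX ?polyOverX // polyOverC rpredZ ?mem1v.
have s_root : root ('X^2 - (a%:A)%:P) s.
  by rewrite /root !hornerE s_sq subrr.
have /dvdp_leq := minPoly_dvdp q_over s_root.
rewrite size_minPoly size_XnsubC // -s_gen dim_Fadjoin dimv1 muln1.
by apply; rewrite -size_poly_eq0 size_XnsubC.
Qed.

Section Setup.
Variables (n : nat) (d R : rat) (L : fieldExtType rat) (s : L).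
Hypotheses (n_odd : odd n) (R_nonsquare : ~ (exists q : rat, q ^+ 2 = R))
  (s_sq : s ^+ 2 = R%:A).

Let m := (n.-1)./2.
Let D := Dval d R.
Let c : L := in_alg L (D ^+ m) * (in_alg L d + s).

Lemma s_notin_base (q : rat) : s != q%:A.
Proof.
apply/eqP => s_eq; apply: R_nonsquare; exists q; apply: (fmorph_inj (in_alg L)).
by rewrite rmorphXn /= -s_eq s_sq.
Qed.

Lemma D_neq0 : D != 0.
Proof. by apply/eqP => D0; apply: R_nonsquare; exists d; apply/eqP; rewrite -subr_eq0 -D0. Qed.

Lemma d_add_s_neq0 : in_alg L d + s != 0.
Proof. by rewrite addrC addr_eq0 -rmorphN s_notin_base. Qed.

Lemma c_neq0 : c != 0.
Proof. by rewrite mulf_neq0 ?d_add_s_neq0 // fmorph_eq0 expf_neq0 ?D_neq0. Qed.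

(* D^n = D^(2m) (d^2 - s^2): the product of c with its conjugate. *)
Lemma Dn_norm : in_alg L (D ^+ n) = in_alg L (D ^+ m) ^+ 2 * (in_alg L d ^+ 2 - s ^+ 2).
Proof.
rewrite s_sq -!rmorphXn -rmorphB -rmorphM; congr (in_alg L _).
by rewrite {1}(odd_halfE n_odd) exprS mulrC -exprM mulnC.
Qed.

Lemma c_quadratic : c ^+ 2 - in_alg L (2 * d * D ^+ m) * c + in_alg L (D ^+ n) = 0.
Proof. by rewrite Dn_norm /c !rmorphM rmorph_nat; ring. Qed.

(* c is not a square root of D^n, i.e. c differs from its conjugate. *)
Lemma c_sq_neq : c ^+ 2 != in_alg L (D ^+ n).
Proof.
have diff : c ^+ 2 - in_alg L (D ^+ n) =
    in_alg L (2 * D ^+ m ^+ 2) * (in_alg L d + s) * s.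
  by rewrite Dn_norm /c !rmorphM !rmorphXn rmorph_nat; ring.
rewrite -subr_eq0 diff !mulf_neq0 ?d_add_s_neq0 //.
  by rewrite fmorph_eq0 mulf_neq0 ?expf_neq0 ?D_neq0.
by have := s_notin_base 0; rewrite scale0r.
Qed.

Section RootOfP.
Variables (M : fieldExtType L) (x : M).
Hypothesis x_root : root (map_poly (in_alg M) (Ppoly n d R s)) x.

Lemma root_Ppoly_exp : x ^+ n = in_alg M c.
Proof.
move: x_root; rewrite /root /Ppoly rmorphB /= map_polyXn map_polyC /=.
by rewrite hornerD hornerN hornerXn hornerC subr_eq0 => /eqP.
Qed.

Lemma root_Ppoly_neq0 : x != 0.
Proof.
have n_gt0 : (0 < n)%N by case: (n) n_odd.
apply/eqP => x0; have := root_Ppoly_exp.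
rewrite x0 expr0n eqn0Ngt n_gt0 => /esym/eqP.
by rewrite fmorph_eq0 (negbTE c_neq0).
Qed.

Lemma root_Ppoly_fpoly :
  root (map_poly (in_alg M \o in_alg L) (fpoly n d R)) (x + in_alg M (in_alg L D) / x).
Proof.
apply: (root_fpoly (c := in_alg M c)) => //; last exact: root_Ppoly_exp.
  by rewrite fmorph_eq0 c_neq0.
rewrite -(rmorph0 (in_alg M)) -c_quadratic (rmorphD (in_alg M)) (rmorphB (in_alg M)).
rewrite (rmorphXn (in_alg M) 2 c) (rmorphM (in_alg M) (in_alg L _) c).
by rewrite (rmorphXn (in_alg L)) (rmorphXn (in_alg M)).
Qed.
End RootOfP.

(* Adjoin a root x of P to L:
   [L(x) : L] = n.  Since c^2 != D^n, the Galois step puts x in L(x + D/x),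
   so the root x + D/x of f_n has degree n over L, a fortiori over Q. *)
Lemma irreducible_fpoly_of_Ppoly :
  irreducible_poly (Ppoly n d R s) -> irreducible_poly (fpoly n d R).
Proof.
move=> P_irr; have [M dimM [x x_root x_gen]] := irredp_FAdjoin P_irr.
have n_gt0 : (0 < n)%N by case: (n) n_odd.
rewrite size_XnsubC // in dimM.
set a := in_alg M (in_alg L D); set theta := x + a / x.
pose E := <<1%AS; theta>>%AS.
have in_E (u : L) : in_alg M u \in E by rewrite rpredZ ?mem1v.
have x_in : x \in E.
  apply: (mem_of_sum_inv (a := a) (n := n) (root_Ppoly_neq0 x_root)).
  - exact: in_E.
  - exact: memv_adjoin.
  - by rewrite (root_Ppoly_exp x_root) in_E.
  rewrite (root_Ppoly_exp x_root) /a -!(rmorphXn (in_alg M)) -(rmorphXn (in_alg L)).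
  by rewrite (inj_eq (fmorph_inj _)) c_sq_neq.
have theta_gen : <<1%AS; theta>>%VS = fullv.
  apply/eqP; rewrite eqEsubv subvf -x_gen /=.
  by rewrite -[X in (_ <= X)%VS](Fadjoin_idP x_in) adjoinSl ?sub1v.
have deg_theta : adjoin_degree 1%AS theta = n.
  by have := dim_Fadjoin 1%AS theta; rewrite theta_gen dimM dimv1 muln1.
apply: (irreducible_of_root_degree _ (root_Ppoly_fpoly x_root));
  by rewrite size_fpoly // deg_theta.
Qed.

Hypothesis s_gen : <<1; s>>%VS = fullv.

(* [L : Q] <= 2 is prime to the odd number n. *)
Lemma coprime_dimL : coprime n (\dim {:L}).
Proof.
have := dim_sqrt_ext s_sq s_gen; have := adim_gt0 (fullv : {subfield L}).
by case: (\dim {:L}) => [|[|[|k]]] //= _ _; rewrite ?coprimen1 ?coprimen2.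
Qed.

(* Otherwise P has an irreducible
   factor A with 1 < size A <= n; adjoin a root x of A to L.  The root
   x + D/x of f_n has degree n over Q, so n divides [L(x) : Q] =
   (size A - 1) [L : Q], hence n divides size A - 1 < n: impossible. *)
Lemma irreducible_Ppoly_of_fpoly :
  irreducible_poly (fpoly n d R) -> irreducible_poly (Ppoly n d R s).
Proof.
move=> f_irr; have n_gt0 : (0 < n)%N by case: (n) n_odd.
have P_size : size (Ppoly n d R s) = n.+1 by rewrite size_XnsubC.
have P_neq0 : Ppoly n d R s != 0 by rewrite -size_poly_eq0 P_size.
split=> [|q q_size q_dvd]; first by rewrite P_size ltnS.
apply: contraT => q_nassoc.
have q_neq0 : q != 0 by apply: contraNneq P_neq0 => q0; rewrite -(dvd0p _) -q0.
have q_lt : (size q < n.+1)%N.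
  by rewrite -P_size ltn_neqAle dvdp_leq // andbT dvdp_size_eqp.
have q_gt1 : (1 < size q)%N by rewrite ltn_neqAle eq_sym q_size size_poly_gt0.
have [A A_irr A_dvd] := irreducible_factor q_gt1.
have A_gt1 : (1 < size A)%N by case: A_irr.
have A_lt : (size A < n.+1)%N := leq_ltn_trans (dvdp_leq q_neq0 A_dvd) q_lt.
have [M dimM [x x_root _]] := irredp_FAdjoin A_irr.
have xP_root : root (map_poly (in_alg M) (Ppoly n d R s)) x.
  by apply: root_dvdp x_root; rewrite dvdp_map (dvdp_trans A_dvd).
pose M0 := baseFieldType M.
have f_root : root (map_poly (in_alg M0) (fpoly n d R))
    (x + in_alg M (in_alg L D) / x : M0).
  by rewrite (eq_map_poly (g := in_alg M \o in_alg L)) ?root_Ppoly_fpoly.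
have := dvdn_dim_of_root f_irr f_root; rewrite size_fpoly //=.
have -> : \dim {:M0} = (\dim {:M} * \dim {:L})%N.
  rewrite -dim_baseVspace; congr (\dim _); apply/vspaceP => u.
  by rewrite mem_baseVspace; apply/idP/idP => _; apply: memvf.
by rewrite Gauss_dvdl ?coprime_dimL // dimM => /dvdn_leq; lia.
Qed.
End Setup.

Unset Implicit Arguments.

(* K0 = Q(sqrt R) is represented by any field extension L of Q generated by an
   element s with s^2 = R. *)
Theorem lemma1 (n : nat) (d R : rat) (L : fieldExtType rat) (s : L) :
  (3 <= n)%N -> odd n -> d != 0 -> ~ (exists q : rat, q ^+ 2 = R) ->
  s ^+ 2 = R%:A -> <<1%VS; s>>%VS = fullv ->
  irreducible_poly (fpoly n d R) <-> irreducible_poly (Ppoly n d R s).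
Proof.
move=> _ n_odd _ R_nonsquare s_sq s_gen; split.
  exact: irreducible_Ppoly_of_fpoly.
exact: irreducible_fpoly_of_Ppoly.
Qed.
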